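(* For a coloured integer $k_x$, let $G_{k_x}(a,b,q)=\sum a^{u}b^{v}q^{n}$, the sum running over all admissible coloured partitions (including the empty one) whose largest part $\lambda_1$ satisfies $\lambda_1\le k_x$ in the total order of coloured integers, where $n,u,v$ are the size and the two weights of the partition. Then for all integers $k \geq 1$, as formal power series, \begin{align*} G_{(2k+1)_{ab}}(a,b,q) &= (1+aq)\, G_{(2k)_{a}}(b,aq,q),\\ G_{(2k+1)_{b^2}}(a,b,q) &= (1+aq)\, G_{(2k)_{b}}(b,aq,q),\\ G_{(2k+2)_{ab}}(a,b,q) &= (1+aq)\, G_{(2k+1)_{a}}(b,aq,q),\\ G_{(2k+1)_{a^2}}(a,b,q) &= (1+aq)\, G_{(2k-1)_{b}}(b,aq,q). \end{align*}
   Context: Coloured integers: every positive integer $k$ occurs in the three colours $a$, $b$, $ab$ (written $k_a$, $k_b$, $k_{ab}$). In addition, odd positive integers occur in the colours $a^2$ and $b^2$: $k_{b^2}$ for every odd $k\ge 1$ and $k_{a^2}$ for every odd $k \geq 3$. The integer value of $k_x$ is $k$ and its colour is $x$. These coloured integers are totally ordered by $$1_{ab} < 1_a < 1_{b^2} <1_{b} <2_{ab} < 2_a <3_{a^2} < 2_{b} <3_{ab} < 3_a < 3_{b^2} <3_b <4_{ab}<4_a<5_{a^2}<4_b<5_{ab}<\cdots,$$ that is, for every odd $m\ge1$: $m_{ab}<m_a<m_{b^2}<m_b<(m+1)_{ab}<(m+1)_a<(m+2)_{a^2}<(m+1)_b<(m+2)_{ab}$. Difference conditions: for a coloured integer $\lambda$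 (the ''upper'' part) of colour $x$ and a coloured integer $\mu$ (the ''lower'' part) of colour $y$, a minimal difference $A(\lambda,\mu)$ is defined as follows, where the row is determined by the colour and the parity of the integer value of $\lambda$, and the entries are listed for $y = a, b, ab, a^2, b^2$ in this order: - $\lambda$ of colour $a$, odd: $2,2,1,2,2$; - $\lambda$ of colour $b^2$: $2,3,2,2,4$; - $\lambda$ of colour $b$, odd: $1,2,1,2,2$; - $\lambda$ of colour $ab$, even: $2,2,2,3,3$; - $\lambda$ of colour $a$, even: $2,2,2,3,3$; - $\lambda$ of colour $a^2$: $3,3,3,4,4$; - $\lambda$ of colour $b$, even: $1,2,1,1,3$; - $\lambda$ of colour $ab$, odd: $2,3,2,2,3$. An admissible coloured partition is a finite (possibly empty) sequence $\lambda_1,\dots,\lambda_s$ of coloured integers, none of which equals $1_{ab}$ or $1_{b^2}$, such that for every $1\le i<s$ the integer values satisfy $\lambda_i-\lambda_{i+1}\ge A(\lambda_i,\lambda_{i+1})$. Its size $n$ is the sum of the integer values of its parts. Its weight $u$ is the number of parts of colour $a$ or $ab$ plus twice the number of parts of colour $a^2$; its weight $v$ is the number of parts of colour $b$ or $ab$ plus twice the number of parts of colour $b^2$. *)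

From mathcomp Require Import all_boot.
Set Implicit Arguments. Unset Strict Implicit. Unset Printing Implicit Defensive.

Inductive colour := Ca | Cb | Cab | Ca2 | Cb2.

Definition cint := (nat * colour)%type.

Definition cvalid (x : cint) : bool :=
  let: (k, c) := x in
  match c with
  | Ca | Cb | Cab => 0 < k
  | Cb2 => odd k
  | Ca2 => odd k && (3 <= k)
  end.

(* Position of a coloured integer in the total order
   1_ab < 1_a < 1_b2 < 1_b < 2_ab < 2_a < 3_a2 < 2_b < 3_ab < ... :
   k_ab |-> 4k-4, k_a |-> 4k-3, k_b2 |-> 4k-2, k_b |-> 4k-1, k_a2 |-> 4k-6. *)
Definition crank (x : cint) : nat :=
  let: (k, c) := x in
  match c with
  | Cab => 4 * k - 4
  | Ca => 4 * k - 3
  | Cb2 => 4 * k - 2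
  | Cb => 4 * k - 1
  | Ca2 => 4 * k - 6
  end.

Definition cle (x y : cint) : bool := crank x <= crank y.

(* Minimal difference A(lambda, mu): row given by colour/parity of lambda,
   column by colour of mu (in the order a, b, ab, a^2, b^2). *)
Definition row (r1 r2 r3 r4 r5 : nat) (c : colour) : nat :=
  match c with Ca => r1 | Cb => r2 | Cab => r3 | Ca2 => r4 | Cb2 => r5 end.

Definition Adiff (l m : cint) : nat :=
  let: (k, c) := l in
  let: (_, d) := m in
  match c with
  | Ca  => if odd k then row 2 2 1 2 2 d else row 2 2 2 3 3 d
  | Cb2 => row 2 3 2 2 4 d
  | Cb  => if odd k then row 1 2 1 2 2 d else row 1 2 1 1 3 d
  | Cab => if odd k then row 2 3 2 2 3 d else row 2 2 2 3 3 d
  | Ca2 => row 3 3 3 4 4 d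
  end.

Definition not_excluded (x : cint) : bool :=
  let: (k, c) := x in
  match c with
  | Cab | Cb2 => k != 1
  | _ => true
  end.

Definition admissible (s : seq cint) : bool :=
  all cvalid s && all not_excluded s &&
  sorted (fun l m : cint => m.1 + Adiff l m <= l.1) s.

Definition psize (s : seq cint) : nat := sumn (map fst s).

Definition ua (c : colour) : nat :=
  match c with Ca | Cab => 1 | Ca2 => 2 | _ => 0 end.
Definition vb (c : colour) : nat :=
  match c with Cb | Cab => 1 | Cb2 => 2 | _ => 0 end.

Definition weight_u (s : seq cint) : nat := sumn (map (fun x => ua x.2) s).
Definition weight_v (s : seq cint) : nat := sumn (map (fun x => vb x.2) s).

Definition bounded_by (kx : cint) (s : seq cint) : bool :=
  if s is x :: _ then cle x kx else true.

Definition cands (n : nat) : seq cint :=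
  flatten [seq [:: (k, Ca); (k, Cb); (k, Cab); (k, Ca2); (k, Cb2)] | k <- iota 1 n].

Fixpoint seqs_len (l : nat) (L : seq cint) : seq (seq cint) :=
  if l is l'.+1 then [seq x :: s | x <- L, s <- seqs_len l' L] else [:: [::]].

Definition seqs_upto (n : nat) (L : seq cint) : seq (seq cint) :=
  flatten [seq seqs_len l L | l <- iota 0 n.+1].

(* Trivariate formal power series in a, b, q with coefficients in nat:
   f i j n is the coefficient of a^i b^j q^n. *)
Definition fps := nat -> nat -> nat -> nat.

Definition fps_mul (f g : fps) : fps := fun i j n =>
  \sum_(i1 < i.+1) \sum_(j1 < j.+1) \sum_(n1 < n.+1)
     f i1 j1 n1 * g (i - i1) (j - j1) (n - n1).

Definition one_plus_aq : fps := fun i j n =>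
  ((i == 0) && (j == 0) && (n == 0)) + ((i == 1) && (j == 0) && (n == 1)).

(* F(a,b,q) |-> F(b, a q, q):  a^u b^v q^n |-> b^u a^v q^(n+v). *)
Definition subst_b_aq_q (F : fps) : fps := fun i j n =>
  if i <= n then F j i (n - i) else 0.

Definition G (kx : cint) : fps := fun u v n =>
  count (fun s => [&& admissible s, bounded_by kx s, psize s == n,
                      weight_u s == u & weight_v s == v])
        (seqs_upto n (cands n)).

From HB Require Import structures.
From mathcomp Require Import all_boot zify.
From Stdlib Require Import Btauto FunctionalExtensionality.

Set Implicit Arguments.
Unset Strict Implicit.
Unset Printing Implicit Defensive.

(* Classify partitions by the rank r of their largest part in the total order:
   [G_rank r] counts those whose largest part has rank at most r and [G_lead r]
   those whose largest part has rank exactly r, so that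
   G_rank (r + 1) = G_rank r + G_lead (r + 1).  Removing the largest part l leaves
   an admissible partition all of whose parts may follow l, hence [G_lead (crank l)]
   is a^u b^v q^l times the series [G_after l] of such partitions, and the table of
   minimal differences identifies [G_after l] with [G_rank s] for an explicit
   smaller s, except after an even ab-part, where one [G_lead] term is added.
   The substitution twist F = (1 + aq) F(b, aq, q) is additive and maps
   a^i b^j q^m F to b^i a^j q^(m+j) (twist F), so the four identities, all of the
   form G_rank (r + 3) = twist (G_rank r) with r odd, follow by induction on r,
   eight ranks at a time, carrying along G_rank (8n+1) = twist (G_after (2n+2)_ab). *)

Definition nat_of_colour (c : colour) : nat :=
  match c with Ca => 0 | Cb => 1 | Cab => 2 | Ca2 => 3 | Cb2 => 4 end.
Definition colour_of_nat (n : nat) : colour :=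
  match n with 0 => Ca | 1 => Cb | 2 => Cab | 3 => Ca2 | _ => Cb2 end.
Lemma nat_of_colourK : cancel nat_of_colour colour_of_nat. Proof. by case. Qed.
HB.instance Definition _ := Equality.copy colour (can_type nat_of_colourK).

Lemma candsE n :
  cands n = [seq (k, c) | k <- iota 1 n, c <- [:: Ca; Cb; Cab; Ca2; Cb2]].
Proof. by []. Qed.

Lemma uniq_cands n : uniq (cands n).
Proof.
rewrite candsE; apply: allpairs_uniq => //; first exact: iota_uniq.
by move=> [? ?] [? ?] _ _ [-> ->].
Qed.

Lemma mem_cands n (x : cint) : 0 < x.1 <= n -> x \in cands n.
Proof.
case: x => k c /= k_range; rewrite candsE.
by apply: allpairs_f; [rewrite mem_iota; lia | case: c].
Qed.

Lemma uniq_seqs_len l (L : seq cint) : uniq L -> uniq (seqs_len l L).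
Proof.
move=> uL; elim: l => [|l IHl] //=.
by apply: allpairs_uniq => // -[? ?] [? ?] _ _ [-> ->].
Qed.

Lemma size_seqs_len l (L : seq cint) s : s \in seqs_len l L -> size s = l.
Proof.
elim: l s => [|l IHl] s /=; first by rewrite inE => /eqP ->.
by case/allpairsP => -[x t] [_ /IHl <- ->].
Qed.

Lemma mem_seqs_len (L : seq cint) s : all (mem L) s -> s \in seqs_len (size s) L.
Proof.
elim: s => [|x s IHs] /=; first by rewrite inE.
by case/andP => Lx /IHs; apply: (allpairs_f (fun x s => x :: s)).
Qed.

Lemma uniq_seqs_upto n (L : seq cint) : uniq L -> uniq (seqs_upto n L).
Proof.
move=> uL; rewrite /seqs_upto; elim: n.+1 0 => [|m IHm] i //=.
rewrite cat_uniq uniq_seqs_len // IHm andbT.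
apply/hasP => -[s /flatten_mapP [l]]; rewrite mem_iota => l_range.
by move=> /size_seqs_len size_s /size_seqs_len; lia.
Qed.

Lemma mem_seqs_upto n (L : seq cint) s :
  all (mem L) s -> size s <= n -> s \in seqs_upto n L.
Proof.
move=> sL size_s; apply/flattenP; exists (seqs_len (size s) L).
  by apply: (map_f (fun l => seqs_len l L)); rewrite mem_iota; lia.
exact: mem_seqs_len.
Qed.

Definition allowed (x : cint) : bool := cvalid x && not_excluded x.

Lemma allowed_gt0 x : allowed x -> 0 < x.1.
Proof. by case: x => k [] /andP [] /=; lia. Qed.

Lemma admissible_allowed s : admissible s -> all allowed s.
Proof.
case/andP=> /andP [valid_s incl_s] _; elim: s valid_s incl_s => //= x s IHs.
by case/andP=> vx vs /andP [ix ins]; rewrite /allowed vx ix IHs.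
Qed.

Lemma size_le_psize s : all allowed s -> size s <= psize s.
Proof.
rewrite /psize; elim: s => //= x s IHs /andP [/allowed_gt0 x_gt0 /IHs]; lia.
Qed.

Lemma part_le_psize s x : x \in s -> x.1 <= psize s.
Proof.
rewrite /psize; elim: s => //= y s IHs; rewrite inE => /predU1P [-> | /IHs]; lia.
Qed.

Lemma mem_seqs_upto_psize s :
  admissible s -> s \in seqs_upto (psize s) (cands (psize s)).
Proof.
move=> adm_s; have allowed_s := admissible_allowed adm_s.
apply: mem_seqs_upto; last exact: size_le_psize.
apply/allP => x xs; apply: mem_cands.
by rewrite allowed_gt0 ?part_le_psize //; apply: (allP allowed_s).
Qed.

Definition diffcond (l m : cint) : bool := m.1 + Adiff l m <= l.1.

Definition head_sat (P : pred cint) (s : seq cint) : bool :=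
  if s is x :: _ then P x else true.

Lemma admissible_cons x s :
  admissible (x :: s) = [&& allowed x, head_sat (diffcond x) s & admissible s].
Proof. by rewrite /admissible /allowed /diffcond /=; case: s => [|y s] /=; btauto. Qed.

Definition fps_add (F G : fps) : fps := fun i j n => F i j n + G i j n.
Definition fps_zero : fps := fun _ _ _ => 0.
Definition fps_one : fps := fun i j n => [&& i == 0, j == 0 & n == 0].
Definition fps_shift (a b m : nat) (F : fps) : fps := fun i j n =>
  if [&& a <= i, b <= j & m <= n] then F (i - a) (j - b) (n - m) else 0.

Lemma fps_ext (F G : fps) : (forall i j n, F i j n = G i j n) -> F = G.
Proof. by move=> FG; do 3 apply: functional_extensionality => ?; apply: FG. Qed.

Definition counted (P : pred cint) (u v n : nat) (s : seq cint) : bool :=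
  [&& admissible s, head_sat P s, psize s == n, weight_u s == u & weight_v s == v].

(* Locked: unification must never unfold the enumeration of candidate lists. *)
Fact gen_key : unit. Proof. by []. Qed.

Definition gen (P : pred cint) : fps := locked_with gen_key (fun u v n =>
  count (counted P u v n) (seqs_upto n (cands n))).

Definition gen_nonnil (P : pred cint) : fps := locked_with gen_key (fun u v n =>
  count (fun s => counted P u v n s && (s != [::])) (seqs_upto n (cands n))).

Lemma genE P u v n : gen P u v n = count (counted P u v n) (seqs_upto n (cands n)).
Proof. by rewrite /gen unlock. Qed.

Lemma gen_nonnilE P u v n :
  gen_nonnil P u v n = count (fun s => counted P u v n s && (s != [::])) (seqs_upto n (cands n)).
Proof. by rewrite /gen_nonnil unlock. Qed.

Lemma count_predI_split (T : Type) (a b : pred T) (s : seq T) :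
  count a s = count (predI b a) s + count (predI (predC b) a) s.
Proof. by rewrite -!count_filter count_predC size_filter. Qed.

Lemma gen_split P : gen P = fps_add fps_one (gen_nonnil P).
Proof.
apply: fps_ext => u v n; rewrite /fps_add genE gen_nonnilE.
rewrite (count_predI_split _ (pred1 [::])); congr (_ + _); last first.
  by apply: eq_count => s; rewrite /= andbC.
have nil_mem : [::] \in seqs_upto n (cands n) by exact: mem_seqs_upto.
have -> : fps_one u v n = counted P u v n [::].
  by rewrite /fps_one /counted /=; case: u v (n) => [|?] [|?] [|?].
rewrite (eq_count (a2 := fun s => (s == [::]) && counted P u v n [::])); last first.
  by move=> s /=; case: eqP => // ->.
case: (counted P u v n [::]).
  rewrite (eq_count (a2 := pred1 [::])) ?count_uniq_mem ?nil_mem ?uniq_seqs_upto ?uniq_cands //.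
  by move=> s; rewrite andbT.
by rewrite (eq_count (a2 := pred0)) ?count_pred0 // => s; rewrite andbF.
Qed.

Lemma gen_nonnil_ext P Q :
  (forall x, allowed x -> P x = Q x) -> gen_nonnil P = gen_nonnil Q.
Proof.
move=> PQ; apply: fps_ext => u v n; rewrite !gen_nonnilE; apply: eq_count => -[|x s] //=.
rewrite /counted admissible_cons /=.
by case: (boolP (allowed x)) => // /PQ ->.
Qed.

Lemma gen_ext P Q : (forall x, allowed x -> P x = Q x) -> gen P = gen Q.
Proof. by move=> PQ; rewrite !gen_split (gen_nonnil_ext PQ). Qed.

Lemma gen_nonnil_pred0 P : (forall x, allowed x -> P x = false) -> gen_nonnil P = fps_zero.
Proof.
move=> P0; apply: fps_ext => u v n; rewrite gen_nonnilE; apply/eqP; rewrite eqn0Ngt -has_count.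
apply/hasPn => -[|x s] _; rewrite /counted ?andbF // admissible_cons /=.
by case: (boolP (allowed x)) => // /P0 ->; rewrite andbF.
Qed.

Lemma gen_pred0 P : (forall x, allowed x -> P x = false) -> gen P = fps_one.
Proof.
move=> P0; rewrite gen_split (gen_nonnil_pred0 P0).
by apply: fps_ext => u v n; rewrite /fps_add addn0.
Qed.

Lemma gen_nonnil_predU P Q : (forall x, allowed x -> ~~ (P x && Q x)) ->
  gen_nonnil (predU P Q) = fps_add (gen_nonnil P) (gen_nonnil Q).
Proof.
move=> PQ; apply: fps_ext => u v n; rewrite /fps_add !gen_nonnilE -count_predUI.
rewrite [X in _ = _ + X](_ : _ = 0) ?addn0.
  by apply: eq_count => -[|x s] /=; rewrite ?andbF // /counted /=; btauto.
apply/eqP; rewrite eqn0Ngt -has_count; apply/hasPn => -[|x s] _.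
  by rewrite /= !andbF.
rewrite /= /counted admissible_cons /=; case: (boolP (allowed x)) => //= /PQ.
move=> nPQ; apply/negP; rewrite !andbT => /andP [/and5P [_ Px _ _ _] /and5P [_ Qx _ _ _]].
by rewrite Px Qx in nPQ.
Qed.

Lemma count_bij (T1 T2 : eqType) (s1 : seq T1) (s2 : seq T2) (P : pred T1) (Q : pred T2)
    (f : T2 -> T1) :
  uniq s1 -> uniq s2 -> {subset P <= s1} -> {subset Q <= s2} -> injective f ->
  (forall y, Q y -> P (f y)) -> (forall x, P x -> exists2 y, Q y & f y = x) ->
  count P s1 = count Q s2.
Proof.
move=> uniq_s1 uniq_s2 Ps1 Qs2 inj_f PfQ fQ_onto; rewrite -!size_filter.
rewrite -(size_map f); apply/perm_size/uniq_perm.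
- exact: filter_uniq.
- by rewrite map_inj_uniq ?filter_uniq.
move=> x; rewrite mem_filter; apply/andP/mapP => [[/fQ_onto [y Qy <-] _] | [y]].
  by exists y; rewrite // mem_filter Qy Qs2.
by rewrite mem_filter => /andP [Qy _] ->; split; [apply: PfQ | apply/Ps1/PfQ].
Qed.

Lemma eqn_addl_sub m p N : (m + p == N) = (m <= N) && (p == N - m).
Proof. by apply/eqP/andP => [<- | [? /eqP ->]]; [rewrite leq_addr addKn | rewrite subnKC]. Qed.

Lemma counted_cons l u v n s : allowed l ->
  counted (pred1 l) u v n (l :: s) =
  [&& ua l.2 <= u, vb l.2 <= v, l.1 <= n &
      counted (diffcond l) (u - ua l.2) (v - vb l.2) (n - l.1) s].
Proof.
move=> allowed_l; rewrite /counted admissible_cons allowed_l /= eqxx.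
by rewrite /psize /weight_u /weight_v /= !eqn_addl_sub; btauto.
Qed.

Lemma gen_nonnil_pred1 l : allowed l ->
  gen_nonnil (pred1 l) = fps_shift (ua l.2) (vb l.2) l.1 (gen (diffcond l)).
Proof.
move=> allowed_l; apply: fps_ext => u v n; rewrite gen_nonnilE /fps_shift genE.
set shifted := [&& _, _ & _]; set Q := counted (diffcond l) _ _ _.
set n' := n - l.1; set P := fun s => counted (pred1 l) u v n s && (s != [::]).
transitivity (count (fun s => shifted && Q s) (seqs_upto n' (cands n'))); last first.
  by case: shifted; [apply: eq_count | rewrite (eq_count (a2 := pred0)) ?count_pred0].
have mem_counted R i j m s : counted R i j m s -> s \in seqs_upto m (cands m).
  by case/and5P => adm_s _ /eqP <- _ _; exact: mem_seqs_upto_psize.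
apply: (count_bij (f := cons l)); rewrite ?uniq_seqs_upto ?uniq_cands //.
- by move=> s /andP [/mem_counted].
- by move=> s /andP [_ /mem_counted].
- by move=> s t [].
- by move=> s; rewrite /P counted_cons // andbT -!andbA.
case=> [|x s] /andP [] //; case: (eqVneq x l) => [-> | x_l]; last first.
  by case/and5P => _ /=; rewrite (negbTE x_l).
by rewrite counted_cons // => Ps _; exists s; rewrite // /shifted -!andbA.
Qed.

Definition fps_mono (a b m : nat) : fps := fun i j n => (i == a) * ((j == b) * (n == m)).

Lemma sum_ord_eq N c (F : nat -> nat) :
  \sum_(x < N) ((x == c :> nat) * F x) = (c < N) * F c.
Proof.
elim: N => [|N IHN]; first by rewrite big_ord0.
rewrite big_ord_recr /= IHN ltnS.
by case: ltngtP => [c_lt_N | c_gt_N | ->]; rewrite ?addn0 ?ltnn.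
Qed.

Lemma fps_mul_mono a b m F : fps_mul (fps_mono a b m) F = fps_shift a b m F.
Proof.
apply: fps_ext => i j n; rewrite /fps_mul /fps_mono /fps_shift.
transitivity (\sum_(i1 < i.+1) (i1 == a :> nat) * \sum_(j1 < j.+1) (j1 == b :> nat) *
                \sum_(n1 < n.+1) (n1 == m :> nat) * F (i - i1) (j - j1) (n - n1)).
  apply: eq_bigr => i1 _; rewrite big_distrr; apply: eq_bigr => j1 _.
  by rewrite /= mulnA big_distrr; apply: eq_bigr => n1 _; rewrite /= !mulnA.
under eq_bigr => i1 _ do under eq_bigr => j1 _ do
  rewrite (sum_ord_eq _ _ (fun n1 => F (i - i1) (j - j1) (n - n1))).
under eq_bigr => i1 _ do
  rewrite (sum_ord_eq _ _ (fun j1 => (m < n.+1) * F (i - i1) (j - j1) (n - m))).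
rewrite (sum_ord_eq _ _ (fun i1 => (b < j.+1) * ((m < n.+1) * F (i - i1) (j - b) (n - m)))).
rewrite !ltnS.
by case: (a <= i) (b <= j) (m <= n) => [] [] []; rewrite /= ?mul1n ?mul0n.
Qed.

Lemma fps_mulDl F1 F2 F : fps_mul (fps_add F1 F2) F = fps_add (fps_mul F1 F) (fps_mul F2 F).
Proof.
apply: fps_ext => i j n; rewrite /fps_mul /fps_add -big_split.
apply: eq_bigr => i1 _; rewrite -big_split; apply: eq_bigr => j1 _.
by rewrite -big_split; apply: eq_bigr => n1 _; rewrite mulnDl.
Qed.

Lemma one_plus_aqE : one_plus_aq = fps_add (fps_mono 0 0 0) (fps_mono 1 0 1).
Proof.
apply: fps_ext => i j n; rewrite /one_plus_aq /fps_add /fps_mono.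
by case: (i == 0) (i == 1) (j == 0) (n == 0) (n == 1) => [] [] [] [] [].
Qed.

Ltac fps_pointwise :=
  apply: fps_ext => ? ? ?;
  rewrite /fps_add /fps_shift /fps_zero /fps_one /subst_b_aq_q;
  repeat case: ifP => ?; try lia; try (f_equal; lia).

Lemma fps_shift0 F : fps_shift 0 0 0 F = F.
Proof. by apply: fps_ext => i j n; rewrite /fps_shift !subn0. Qed.

Lemma fps_shiftD a b m F1 F2 :
  fps_shift a b m (fps_add F1 F2) = fps_add (fps_shift a b m F1) (fps_shift a b m F2).
Proof. fps_pointwise. Qed.

Lemma fps_shift_shift a b m a' b' m' F :
  fps_shift a b m (fps_shift a' b' m' F) = fps_shift (a + a') (b + b') (m + m') F.
Proof. fps_pointwise. Qed.

Lemma subst_add F1 F2 :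
  subst_b_aq_q (fps_add F1 F2) = fps_add (subst_b_aq_q F1) (subst_b_aq_q F2).
Proof. fps_pointwise. Qed.

Lemma subst_shift a b m F :
  subst_b_aq_q (fps_shift a b m F) = fps_shift b a (m + b) (subst_b_aq_q F).
Proof. fps_pointwise. Qed.

Lemma subst_one : subst_b_aq_q fps_one = fps_one.
Proof. fps_pointwise. Qed.

Definition twist (F : fps) : fps := fps_mul one_plus_aq (subst_b_aq_q F).

Lemma twistE F :
  twist F = fps_add (subst_b_aq_q F) (fps_shift 1 0 1 (subst_b_aq_q F)).
Proof. by rewrite /twist one_plus_aqE fps_mulDl !fps_mul_mono fps_shift0. Qed.

Lemma twist_add F1 F2 : twist (fps_add F1 F2) = fps_add (twist F1) (twist F2).
Proof. rewrite !twistE subst_add fps_shiftD; fps_pointwise. Qed.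

Lemma twist_shift a b m F : twist (fps_shift a b m F) = fps_shift b a (m + b) (twist F).
Proof.
rewrite !twistE subst_shift fps_shiftD !fps_shift_shift.
by rewrite [1 + b]addnC [0 + a]addnC [1 + _]addnC.
Qed.

Lemma twist_zero : twist fps_zero = fps_zero.
Proof. rewrite twistE; fps_pointwise. Qed.

Lemma twist_one : twist fps_one = fps_add fps_one (fps_shift 1 0 1 fps_one).
Proof. by rewrite twistE subst_one. Qed.

Lemma fps_addA F1 F2 F3 : fps_add F1 (fps_add F2 F3) = fps_add (fps_add F1 F2) F3.
Proof. by apply: fps_ext => i j n; rewrite /fps_add addnA. Qed.

(* Shifts of the same series whose exponents are provably equal are first made
   syntactically equal, then the identity is checked coefficientwise. *)
Ltac fps_solve :=
  rewrite ?twist_add ?twist_shift ?twist_zero ?twist_one ?fps_shiftD ?fps_shift_shift;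
  repeat match goal with
  | |- context [fps_shift ?a ?b ?m ?F] =>
      match goal with
      | |- context [fps_shift ?a' ?b' ?m' F] =>
          assert_fails constr_eq (a, b, m) (a', b', m');
          replace (fps_shift a' b' m' F) with (fps_shift a b m F) by (f_equal; lia)
      end
  end;
  apply: fps_ext => ? ? ?; rewrite /fps_add /fps_zero; lia.

Definition G_rank (r : nat) : fps := gen (fun x => crank x <= r).
Definition G_lead (r : nat) : fps := gen_nonnil (fun x => crank x == r).
Definition G_after (l : cint) : fps := gen (diffcond l).

Lemma G_crank kx : G kx = G_rank (crank kx).
Proof. by apply: fps_ext => u v n; rewrite /G_rank genE. Qed.

Lemma allowed_crank x : allowed x -> (0 < crank x) && (crank x != 2).
Proof. by case: x => k []; rewrite /allowed /=; lia. Qed.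

Lemma crank_inj x y : allowed x -> allowed y -> crank x = crank y -> x = y.
Proof.
case: x y => [k c] [k' c']; rewrite /allowed.
by case: c; case: c' => /= ? ? ?; lia || (have -> : k = k' by lia).
Qed.

Lemma G_rank0 : G_rank 0 = fps_one.
Proof. by apply: gen_pred0 => x /allowed_crank; lia. Qed.

Lemma G_rank_addS r k : G_rank (r + k.+1) = fps_add (G_rank (r + k)) (G_lead (r + k.+1)).
Proof.
rewrite /G_rank /G_lead !gen_split.
rewrite (gen_nonnil_ext (Q := predU (fun x => crank x <= r + k) (fun x => crank x == r + k.+1))).
  by rewrite gen_nonnil_predU; [fps_solve | move=> x _ /=; lia].
by move=> x _ /=; lia.
Qed.

Lemma G_rankS r : G_rank r.+1 = fps_add (G_rank r) (G_lead r.+1).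
Proof. exact: (G_rank_addS 0). Qed.

Lemma G_lead_crank l : allowed l ->
  G_lead (crank l) = fps_shift (ua l.2) (vb l.2) l.1 (G_after l).
Proof.
move=> allowed_l; rewrite /G_lead -gen_nonnil_pred1 //; apply: gen_nonnil_ext => x allowed_x.
by apply/eqP/eqP => [/crank_inj -> | ->].
Qed.

Lemma G_lead_at l r F : allowed l -> crank l = r -> G_after l = F ->
  G_lead r = fps_shift (ua l.2) (vb l.2) l.1 F.
Proof. by move=> allowed_l <- <-; exact: G_lead_crank. Qed.

Ltac simpl_parity := rewrite /= ?oddD ?oddM /= ?addbF ?addbb /=.

Ltac by_colour := case=> k []; rewrite /allowed /diffcond /Adiff; simpl_parity; lia.

Ltac lead_at l :=
  apply: (@G_lead_at l); [rewrite /allowed; simpl_parity; lia | rewrite /=; lia |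
                          done || (apply: gen_ext; by_colour)].

Section Leads.
Variable n : nat.

Lemma G_lead_even_ab : G_lead (8 * n + 4) = fps_shift 1 1 (2 * n + 2) (G_after (2 * n + 2, Cab)).
Proof. by lead_at (2 * n + 2, Cab). Qed.

Lemma G_lead_even_a : G_lead (8 * n + 5) = fps_shift 1 0 (2 * n + 2) (G_after (2 * n + 2, Cab)).
Proof. by lead_at (2 * n + 2, Ca). Qed.

Lemma G_lead_odd_a2 : G_lead (8 * n + 6) = fps_shift 2 0 (2 * n + 3) (G_after (2 * n + 2, Cab)).
Proof. by lead_at (2 * n + 3, Ca2). Qed.

Lemma G_lead_even_b : G_lead (8 * n + 7) = fps_shift 0 1 (2 * n + 2) (G_rank (8 * n + 1)).
Proof. by lead_at (2 * n + 2, Cb). Qed.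

Lemma G_lead_odd_ab : G_lead (8 * n + 8) = fps_shift 1 1 (2 * n + 3) (G_rank (8 * n + 1)).
Proof. by lead_at (2 * n + 3, Cab). Qed.

Lemma G_lead_odd_a : G_lead (8 * n + 9) = fps_shift 1 0 (2 * n + 3) (G_rank (8 * n + 4)).
Proof. by lead_at (2 * n + 3, Ca). Qed.

Lemma G_lead_odd_b2 : G_lead (8 * n + 10) = fps_shift 0 2 (2 * n + 3) (G_rank (8 * n + 1)).
Proof. by lead_at (2 * n + 3, Cb2). Qed.

Lemma G_lead_odd_b : G_lead (8 * n + 11) = fps_shift 0 1 (2 * n + 3) (G_rank (8 * n + 5)).
Proof. by lead_at (2 * n + 3, Cb). Qed.

Lemma G_after_even_ab :
  G_after (2 * n + 4, Cab) = fps_add (G_rank (8 * n + 5)) (G_lead (8 * n + 7)).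
Proof.
rewrite /G_after (gen_ext (Q := predU (fun x => crank x <= 8 * n + 5)
                                     (fun x => crank x == 8 * n + 7))); last by by_colour.
rewrite gen_split gen_nonnil_predU; last by move=> x _ /=; lia.
by rewrite /G_rank /G_lead gen_split; fps_solve.
Qed.
End Leads.

Lemma G_after_2ab : G_after (2, Cab) = fps_one.
Proof. by apply: gen_pred0; by_colour. Qed.

Lemma G_lead1 : G_lead 1 = fps_shift 1 0 1 fps_one.
Proof. by apply: (@G_lead_at (1, Ca)) => //; apply: gen_pred0; by_colour. Qed.

Lemma G_lead2 : G_lead 2 = fps_zero.
Proof. by apply: gen_nonnil_pred0 => x /allowed_crank; lia. Qed.

Lemma G_lead3 : G_lead 3 = fps_shift 0 1 1 fps_one.
Proof. by apply: (@G_lead_at (1, Cb)) => //; apply: gen_pred0; by_colour. Qed.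

Lemma twist_rank_step r c :
  G_rank (r + (c + 3)) = twist (G_rank (r + c)) ->
  fps_add (G_lead (r + (c + 4))) (G_lead (r + (c + 5))) =
    twist (fps_add (G_lead (r + (c + 1))) (G_lead (r + (c + 2)))) ->
  G_rank (r + (c + 5)) = twist (G_rank (r + (c + 2))).
Proof.
rewrite !addnA; move: (r + c) => {}r law leads.
rewrite [G_rank (r + 5)]G_rank_addS [G_rank (r + 4)]G_rank_addS -fps_addA leads law.
rewrite [G_rank (r + 2)]G_rank_addS [G_rank (r + 1)]G_rank_addS addn0.
by rewrite -fps_addA [RHS]twist_add.
Qed.

Section Block.
Variable n : nat.
Let K := G_after (2 * n + 2, Cab).
Let K' := fps_add (G_rank (8 * n + 5)) (G_lead (8 * n + 7)).

Lemma G_after_next : G_after (2 * n.+1 + 2, Cab) = K'.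
Proof. by rewrite (_ : 2 * n.+1 + 2 = 2 * n + 4) ?G_after_even_ab; last lia. Qed.

Lemma G_lead_next_ab : G_lead (8 * n + 12) = fps_shift 1 1 (2 * n + 4) K'.
Proof.
rewrite (_ : 8 * n + 12 = 8 * n.+1 + 4) ?G_lead_even_ab ?G_after_next; last lia.
by rewrite (_ : 2 * n.+1 + 2 = 2 * n + 4); last lia.
Qed.

Lemma G_lead_next_a : G_lead (8 * n + 13) = fps_shift 1 0 (2 * n + 4) K'.
Proof.
rewrite (_ : 8 * n + 13 = 8 * n.+1 + 5) ?G_lead_even_a ?G_after_next; last lia.
by rewrite (_ : 2 * n.+1 + 2 = 2 * n + 4); last lia.
Qed.

Lemma G_lead_next_a2 : G_lead (8 * n + 14) = fps_shift 2 0 (2 * n + 5) K'.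
Proof.
rewrite (_ : 8 * n + 14 = 8 * n.+1 + 6) ?G_lead_odd_a2 ?G_after_next; last lia.
by rewrite (_ : 2 * n.+1 + 3 = 2 * n + 5); last lia.
Qed.

Lemma twist_leads_8n4 : G_rank (8 * n + 1) = twist K ->
  fps_add (G_lead (8 * n + 7)) (G_lead (8 * n + 8)) =
    twist (fps_add (G_lead (8 * n + 4)) (G_lead (8 * n + 5))).
Proof.
move=> after.
rewrite G_lead_even_b G_lead_odd_ab G_lead_even_ab G_lead_even_a twist_add !twist_shift -after.
fps_solve.
Qed.

Lemma twist_leads_8n6 : G_rank (8 * n + 1) = twist K ->
  G_rank (8 * n + 4) = twist (G_rank (8 * n + 1)) ->
  fps_add (G_lead (8 * n + 9)) (G_lead (8 * n + 10)) =
    twist (fps_add (G_lead (8 * n + 6)) (G_lead (8 * n + 7))).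
Proof.
move=> after law1.
rewrite G_lead_odd_a G_lead_odd_b2 G_lead_odd_a2 G_lead_even_b twist_add !twist_shift.
rewrite -after -law1; fps_solve.
Qed.

Lemma twist_rank_8n4 : G_rank (8 * n + 1) = twist K ->
  G_rank (8 * n + 6) = twist (G_rank (8 * n + 3)) ->
  twist (G_rank (8 * n + 4)) =
    fps_add (G_rank (8 * n + 6)) (fps_shift 1 1 (2 * n + 3) (G_rank (8 * n + 1))).
Proof.
move=> after law3.
rewrite G_rank_addS twist_add -law3 G_lead_even_ab twist_shift -after; fps_solve.
Qed.

Lemma twist_leads_8n8 : G_rank (8 * n + 1) = twist K ->
  G_rank (8 * n + 4) = twist (G_rank (8 * n + 1)) ->
  G_rank (8 * n + 6) = twist (G_rank (8 * n + 3)) ->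
  fps_add (G_lead (8 * n + 11)) (G_lead (8 * n + 12)) =
    twist (fps_add (G_lead (8 * n + 8)) (G_lead (8 * n + 9))).
Proof.
move=> after law1 law3.
rewrite G_lead_odd_ab G_lead_odd_a twist_add !twist_shift -law1 twist_rank_8n4 //.
rewrite G_lead_odd_b G_lead_next_ab /K' G_lead_even_b [G_rank (8 * n + 6)]G_rank_addS.
rewrite [G_rank (8 * n + 5)]G_rank_addS G_lead_even_a G_lead_odd_a2.
fps_solve.
Qed.

Lemma twist_leads_8n10 :
  G_rank (8 * n + 4) = twist (G_rank (8 * n + 1)) ->
  G_rank (8 * n + 8) = twist (G_rank (8 * n + 5)) ->
  fps_add (G_lead (8 * n + 13)) (G_lead (8 * n + 14)) =
    twist (fps_add (G_lead (8 * n + 10)) (G_lead (8 * n + 11))).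
Proof.
move=> law1 law5.
rewrite G_lead_odd_b2 G_lead_odd_b twist_add !twist_shift -law1 -law5.
rewrite G_lead_next_a G_lead_next_a2 /K' [G_rank (8 * n + 8)]G_rank_addS.
rewrite [G_rank (8 * n + 7)]G_rank_addS [G_rank (8 * n + 6)]G_rank_addS.
rewrite [G_rank (8 * n + 5)]G_rank_addS G_lead_even_a G_lead_odd_a2 G_lead_even_b G_lead_odd_ab.
fps_solve.
Qed.

Lemma twist_after_next :
  G_rank (8 * n + 4) = twist (G_rank (8 * n + 1)) ->
  G_rank (8 * n + 8) = twist (G_rank (8 * n + 5)) ->
  G_rank (8 * n + 9) = twist K'.
Proof.
move=> law1 law5.
rewrite /K' twist_add -law5 G_lead_even_b twist_shift -law1 G_rank_addS G_lead_odd_a.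
fps_solve.
Qed.
End Block.

Definition twist_block (n : nat) : Prop :=
  [/\ G_rank (8 * n + 1) = twist (G_after (2 * n + 2, Cab)),
      G_rank (8 * n + 4) = twist (G_rank (8 * n + 1))
    & G_rank (8 * n + 6) = twist (G_rank (8 * n + 3))].

Lemma twist_block0 : twist_block 0.
Proof.
have d4 := G_lead_even_ab 0; have d5 := G_lead_even_a 0; have d6 := G_lead_odd_a2 0.
rewrite /twist_block !muln0 !add0n G_after_2ab in d4 d5 d6 *.
split; rewrite !G_rankS G_rank0 ?G_lead1 ?G_lead2 ?G_lead3 ?d4 ?d5 ?d6; fps_solve.
Qed.

Lemma twist_blockS n : twist_block n ->
  [/\ G_rank (8 * n + 8) = twist (G_rank (8 * n + 5)),
      G_rank (8 * n + 10) = twist (G_rank (8 * n + 7))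
    & twist_block n.+1].
Proof.
case=> after law1 law3.
have law5 : G_rank (8 * n + 8) = twist (G_rank (8 * n + 5)) :=
  @twist_rank_step (8 * n) 3 law3 (twist_leads_8n4 after).
have law7 : G_rank (8 * n + 10) = twist (G_rank (8 * n + 7)) :=
  @twist_rank_step (8 * n) 5 law5 (twist_leads_8n6 after law1).
have law9 : G_rank (8 * n + 12) = twist (G_rank (8 * n + 9)) :=
  @twist_rank_step (8 * n) 7 law7 (twist_leads_8n8 after law1 law3).
have law11 : G_rank (8 * n + 14) = twist (G_rank (8 * n + 11)) :=
  @twist_rank_step (8 * n) 9 law9 (twist_leads_8n10 law1 law5).
split=> //; rewrite /twist_block G_after_next.
have shift8 c : 8 * n.+1 + c = 8 * n + (8 + c) by lia.
rewrite !shift8.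
by split; [exact: twist_after_next | exact: law9 | exact: law11].
Qed.

Lemma twist_block_all n : twist_block n.
Proof. by elim: n => [|n /twist_blockS []//]; exact: twist_block0. Qed.

Lemma G_rank_twist m : G_rank (2 * m + 4) = twist (G_rank (2 * m + 1)).
Proof.
have eq_law r s r' s' : G_rank s = twist (G_rank r) -> r' = r -> s' = s ->
    G_rank s' = twist (G_rank r').
  by move=> law -> ->.
have [_ law1 law3] := twist_block_all (m %/ 4).
have [law5 law7 _] := twist_blockS (twist_block_all (m %/ 4)).
have := ltn_pmod m (isT : 0 < 4); rewrite {2 3}(divn_eq m 4).
case: (m %% 4) => [|[|[|[|i]]]] // _;
  [apply: (eq_law _ _ _ _ law1) | apply: (eq_law _ _ _ _ law3)
  | apply: (eq_law _ _ _ _ law5) | apply: (eq_law _ _ _ _ law7)]; lia.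
Qed.

Unset Implicit Arguments.

Theorem proposition2p1 (k : nat) (hk : 1 <= k) :
  [/\ G (2 * k + 1, Cab) = fps_mul one_plus_aq (subst_b_aq_q (G (2 * k, Ca))),
      G (2 * k + 1, Cb2) = fps_mul one_plus_aq (subst_b_aq_q (G (2 * k, Cb))),
      G (2 * k + 2, Cab) = fps_mul one_plus_aq (subst_b_aq_q (G (2 * k + 1, Ca)))
    & G (2 * k + 1, Ca2) = fps_mul one_plus_aq (subst_b_aq_q (G (2 * k - 1, Cb)))].
Proof.
have twist_at m r s : r = 2 * m + 1 -> s = 2 * m + 4 -> G_rank s = twist (G_rank r).
  by move=> -> ->; exact: G_rank_twist.
rewrite !G_crank /=.
split; [apply: (twist_at (4 * k - 2)) | apply: (twist_at (4 * k - 1))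
       | apply: (twist_at (4 * k)) | apply: (twist_at (4 * k - 3))]; lia.
Qed.
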